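(* Let $m$ be a positive integer, let $G$ be a graph, and let $H = K_m \,\square\, G$ be the Cartesian product of the complete graph $K_m$ with $G$. Then $\chi_{td}(H) \leq m\,\chi_{td}(G) + \frac{m(m-1)}{2}$.
   Context: For a simple graph $G$ and a positive integer $k$, a proper $k$-total difference labeling of $G$ is a function $f: V(G)\to\{1,\dots,k\}$, extended to edges by $f(\{u,v\}) = |f(u)-f(v)|$, such that: (i) adjacent vertices receive different labels; (ii) two distinct edges sharing a vertex receive different labels; (iii) no edge receives the same label as either of its endpoints. $\chi_{td}(G)$ denotes the smallest $k$ for which such a labeling exists. The Cartesian product $G_1\,\square\, G_2$ has vertex set $V(G_1)\times V(G_2)$, with $(g_1,g_2)$ adjacent to $(g_1',g_2')$ iff either $g_1=g_1'$ and $g_2g_2'\in E(G_2)$, or $g_2=g_2'$ and $g_1g_1'\in E(G_1)$. *)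

From mathcomp Require Import all_boot.
Set Implicit Arguments. Unset Strict Implicit. Unset Printing Implicit Defensive.

Definition simple_graph (T : finType) (e : rel T) : Prop :=
  irreflexive e /\ symmetric e.

Definition absdiff (a b : nat) : nat := (a - b) + (b - a).

Definition proper_td_labeling (T : finType) (e : rel T) (k : nat) (f : T -> nat) : Prop :=
  (forall v, 1 <= f v <= k) /\
  (forall u v, e u v -> f u != f v) /\
  (forall u v w, e u v -> e u w -> v != w -> absdiff (f u) (f v) != absdiff (f u) (f w)) /\
  (forall u v, e u v -> absdiff (f u) (f v) != f u).

Definition has_td_labeling (T : finType) (e : rel T) (k : nat) : Prop :=
  exists f : T -> nat, proper_td_labeling e k f.

Definition is_chi_td (T : finType) (e : rel T) (k : nat) : Prop :=
  0 < k /\ has_td_labeling e k /\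
  forall k', 0 < k' -> has_td_labeling e k' -> k <= k'.

Definition complete_rel (m : nat) : rel 'I_m := fun i j => i != j.

Definition cart_prod (T1 T2 : finType) (e1 : rel T1) (e2 : rel T2) : rel (T1 * T2) :=
  fun x y => ((x.1 == y.1) && e2 x.2 y.2) || ((x.2 == y.2) && e1 x.1 y.1).

From mathcomp Require Import all_boot zify.
Set Implicit Arguments. Unset Strict Implicit. Unset Printing Implicit Defensive.

(* Take a labeling g of G with k = chi_td(G) labels and label (i, v) of
   K_m x G by g v + c i, where the offsets 0 = c 0 < ... < c (m-1) are at
   least k apart, no c j lies in (2 c i, 2 c i + k] for i < j, and no three
   offsets form an arithmetic progression. Edges inside a copy of G then
   carry labels < k and edges of K_m labels >= k, and every condition of a
   proper labeling of the product reduces to one of G or of c. It remains to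
   find such offsets with c (m-1) <= (m-1) k + m (m-1) / 2. For m <= 16 they
   are c i = i k + s i for explicit tables s, checked for all k at once. For
   larger m take c i = i (k + 3a - 1) + a + F i (i > 0), a = (m+1)/6, where the
   coloring F of [0, m-1] by fewer than a colors maps no three-term
   progression to a three-term progression (constant ones included); F is
   built by F x = [x mod 4 >= 2] + 3 F (x / 4) from explicit base colorings. *)

Lemma absdiffDr a b x : absdiff (a + x) (b + x) = absdiff a b.
Proof. rewrite /absdiff; lia. Qed.

Lemma absdiffDl a b x : absdiff (x + a) (x + b) = absdiff a b.
Proof. rewrite /absdiff; lia. Qed.

Lemma absdiff_lt k a b : 0 < a <= k -> 0 < b <= k -> absdiff a b < k.
Proof. rewrite /absdiff; lia. Qed.

Lemma leq_mul_step p q K : p < q -> p * K + K <= q * K.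
Proof. by move=> pq; rewrite -mulSnr leq_mul2r pq orbT. Qed.

Record td_offsets (n k : nat) (c : nat -> nat) : Prop := TdOffsets {
  td_offsets0 : c 0 = 0;
  td_offsets_gap : forall i j, i < j -> j <= n -> c i + k <= c j;
  td_offsets_avoid_double :
    forall i j, i < j -> j <= n -> ~~ (2 * c i < c j <= 2 * c i + k);
  td_offsets_ap_free : forall a b d, a < b -> b < d -> d <= n -> c a + c d != 2 * c b }.

Section Offsets.
Variables (n k : nat) (c : nat -> nat).
Hypothesis c_offsets : td_offsets n k c.

Lemma td_offsets_ge i : 0 < i -> i <= n -> k <= c i.
Proof.
by move=> i0 i_n; have := td_offsets_gap c_offsets i0 i_n; rewrite (td_offsets0 c_offsets).
Qed.

Lemma td_offsets_mono i j : i <= j -> j <= n -> c i <= c j.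
Proof.
rewrite leq_eqVlt => /orP [/eqP -> //|lt_ij] j_n.
by have := td_offsets_gap c_offsets lt_ij j_n; lia.
Qed.

Lemma td_offsets_sep i j : i != j -> i <= n -> j <= n -> k <= absdiff (c i) (c j).
Proof.
move=> ij i_n j_n; have gap := td_offsets_gap c_offsets; rewrite /absdiff.
case: (ltngtP i j) => [lt_ij|lt_ji|]; last by move/eqP; rewrite (negPf ij).
  by have := gap i j lt_ij j_n; lia.
by have := gap j i lt_ji i_n; lia.
Qed.

Lemma td_offsets_absdiff_inj a b d : 0 < k -> a != b -> a != d -> b != d ->
  a <= n -> b <= n -> d <= n -> absdiff (c a) (c b) != absdiff (c a) (c d).
Proof.
move=> k_gt0 ab ad; wlog lt_bd : b d ab ad / b < d => [hwlog bd an bn dn|_ an bn dn].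
  case: (ltngtP b d) => [lt_bd|lt_db|eq_bd]; first exact: hwlog.
    by rewrite eq_sym; apply: hwlog; rewrite // eq_sym.
  by rewrite eq_bd eqxx in bd.
have gap := td_offsets_gap c_offsets; rewrite /absdiff.
case: (ltngtP a b) => [lt_ab|lt_ba|]; last by move/eqP; rewrite (negPf ab).
  by have := gap a b lt_ab bn; have := gap b d lt_bd dn; lia.
case: (ltngtP a d) => [lt_ad|lt_da|]; last by move/eqP; rewrite (negPf ad).
  have := td_offsets_ap_free c_offsets lt_ba lt_ad dn.
  by have := gap b a lt_ba an; have := gap a d lt_ad dn; lia.
by have := gap b d lt_bd dn; have := gap d a lt_da an; lia.
Qed.

Lemma td_offsets_absdiff_neq_addl a b x : a != b -> a <= n -> b <= n ->
  0 < x <= k -> absdiff (c a) (c b) != x + c a.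
Proof.
move=> ab an bn x_k; rewrite /absdiff.
case: (ltngtP a b) => [lt_ab|lt_ba|]; last by move/eqP; rewrite (negPf ab).
  by have := td_offsets_avoid_double c_offsets lt_ab bn; lia.
by have := td_offsets_gap c_offsets lt_ba an; lia.
Qed.

End Offsets.

Definition product_labeling (n : nat) (T : Type) (g : T -> nat) (c : nat -> nat)
  (x : 'I_n * T) : nat := g x.2 + c x.1.

Section ProductLabeling.
Variables (n k : nat) (T : finType) (e : rel T) (g : T -> nat) (c : nat -> nat).
Hypotheses (k_gt0 : 0 < k) (g_td : proper_td_labeling e k g)
           (c_offsets : td_offsets n k c).

Let H := cart_prod (@complete_rel n.+1) e.
Let f : 'I_n.+1 * T -> nat := product_labeling g c.

Let g_range := proj1 g_td.
Let g_adj := proj1 (proj2 g_td).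
Let g_edges_at := proj1 (proj2 (proj2 g_td)).
Let g_edge_endpoint := proj2 (proj2 (proj2 g_td)).
Let sep (i j : 'I_n.+1) : i != j -> k <= absdiff (c i) (c j).
Proof. by move=> ij; apply: td_offsets_sep (leq_ord i) (leq_ord j). Qed.

Lemma cart_prod_complete_edge x y :
  H x y -> (x.1 = y.1 /\ e x.2 y.2) \/ (x.2 = y.2 /\ x.1 != y.1).
Proof. by case/orP => /andP [/eqP xy1 exy]; [left|right]. Qed.

Lemma product_labeling_range x : 0 < f x <= k + c n.
Proof.
case: x => [i u]; rewrite /f /product_labeling /=.
by have := g_range u; have := td_offsets_mono c_offsets (leq_ord i) (leqnn n); lia.
Qed.

Lemma product_labeling_adj x y : H x y -> f x != f y.
Proof.
case: x y => [i u] [j v] /cart_prod_complete_edge /= [[<- euv]|[<- ij]];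
  rewrite /f /product_labeling /=.
  by rewrite eqn_add2r; exact: g_adj.
by rewrite eqn_add2l; apply: contraTneq (sep ij) => ->; rewrite /absdiff subnn -ltnNge.
Qed.

Lemma product_labeling_edges_at x y z :
  H x y -> H x z -> y != z -> absdiff (f x) (f y) != absdiff (f x) (f z).
Proof.
case: x y z => [i u] [j v] [l w] /cart_prod_complete_edge /= [[<- euv]|[<- ij]]
  /cart_prod_complete_edge /= [[<- euw]|[<- il]] yz; rewrite /f /product_labeling /=.
- rewrite !absdiffDr; apply: g_edges_at => //.
  by apply: contraNneq yz => ->.
- rewrite absdiffDr absdiffDl.
  by have := absdiff_lt (g_range u) (g_range v); have := sep il; lia.
- rewrite absdiffDr absdiffDl.
  by have := absdiff_lt (g_range u) (g_range w); have := sep ij; lia.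
- rewrite !absdiffDl; apply: (td_offsets_absdiff_inj c_offsets); rewrite ?leq_ord //.
  by apply: contraNneq yz => /val_inj ->.
Qed.

Lemma product_labeling_edge_endpoint x y : H x y -> absdiff (f x) (f y) != f x.
Proof.
case: x y => [i u] [j v] /cart_prod_complete_edge /= [[<- euv]|[<- ij]];
  rewrite /f /product_labeling /=.
  rewrite absdiffDr; have [i0|i_gt0] := posnP i.
    by rewrite i0 (td_offsets0 c_offsets) addn0; exact: g_edge_endpoint.
  have := td_offsets_ge c_offsets i_gt0 (leq_ord i).
  by have := absdiff_lt (g_range u) (g_range v); lia.
by rewrite absdiffDl; apply: (td_offsets_absdiff_neq_addl c_offsets); rewrite ?leq_ord.
Qed.

Lemma cart_prod_td_labeling : proper_td_labeling H (k + c n) f.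
Proof.
split; first exact: product_labeling_range.
split; first exact: product_labeling_adj.
split; first exact: product_labeling_edges_at.
exact: product_labeling_edge_endpoint.
Qed.

End ProductLabeling.

Lemma perturbed_td_offsets n k a (t : nat -> nat) :
  0 < a -> t 0 = 0 -> (forall i, 0 < i -> i <= n -> a <= t i < 2 * a) ->
  (forall x y z, 0 < x -> x < y -> y < z -> z <= n -> x + z = 2 * y ->
     t x + t z != 2 * t y) ->
  td_offsets n k (fun i => i * (k + 3 * a - 1) + t i).
Proof.
move=> a_gt0 t0 t_range t_ap; set K := k + 3 * a - 1.
have t_le i : i <= n -> t i < 2 * a.
  by case: (posnP i) => [->|i0 i_n]; [rewrite t0; lia | have := t_range i i0 i_n; lia].
split=> [|i j ij j_n|i j ij j_n|x y z xy yz z_n]; first by rewrite t0.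
- have := t_range j (leq_ltn_trans (leq0n i) ij) j_n.
  have := t_le i (ltnW (leq_trans ij j_n)).
  by have := leq_mul_step K ij; lia.
- have := t_range j (leq_ltn_trans (leq0n i) ij) j_n.
  have := t_le i (ltnW (leq_trans ij j_n)).
  case: (ltngtP j (2 * i)) => [lt_j2i|lt_2ij|j2i].
  + have := leq_mul_step K lt_j2i; rewrite -mulnA; have := t_le j j_n; lia.
  + have := leq_mul_step K lt_2ij; rewrite -mulnA.
    case: (ltngtP j (2 * i).+1) => [|lt_j|->]; first lia.
      by have := leq_mul_step K lt_j; rewrite (mulSnr (2 * i)) -mulnA; lia.
    by rewrite (mulSnr (2 * i)) -mulnA; lia.
  + have i_gt0 : 0 < i by lia.
    have := t_range i i_gt0 (ltnW (leq_trans ij j_n)).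
    by rewrite j2i -mulnA; lia.
- have t_y := t_range y (leq_ltn_trans (leq0n x) xy) (ltnW (leq_trans yz z_n)).
  have t_z := t_range z (leq_ltn_trans (leq0n y) yz) z_n.
  have t_x := t_le x (ltnW (leq_trans (ltn_trans xy yz) z_n)).
  have -> : x * K + t x + (z * K + t z) = (x + z) * K + (t x + t z) by rewrite mulnDl; lia.
  rewrite mulnDr; case: (ltngtP (x + z) (2 * y)) => [lt_xz|lt_y|xz].
  + by have := leq_mul_step K lt_xz; rewrite -mulnA; lia.
  + by have := leq_mul_step K lt_y; rewrite -mulnA; lia.
  + rewrite xz -mulnA eqn_add2l; case: (posnP x) => [x0|x_gt0]; last exact: t_ap.
    by move: t_y t_z; rewrite x0 t0; lia.
Qed.

Definition all_pairs (n : nat) (P : nat -> nat -> bool) : bool :=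
  all (fun j => all (fun i => P i j) (iota 0 j)) (iota 0 n.+1).

Lemma all_pairs_sound n P : all_pairs n P -> forall i j, i < j -> j <= n -> P i j.
Proof.
move=> /allP Pn i j ij j_n.
have := Pn j; rewrite mem_iota ltnS => /(_ j_n) /allP; apply.
by rewrite mem_iota.
Qed.

Definition all_triples (n : nat) (P : nat -> nat -> nat -> bool) : bool :=
  all_pairs n (fun y z => all (fun x => P x y z) (iota 0 y)).

Lemma all_triples_sound n P :
  all_triples n P -> forall x y z, x < y -> y < z -> z <= n -> P x y z.
Proof.
move=> /all_pairs_sound Pn x y z xy yz z_n.
by have /allP := Pn y z yz z_n; apply; rewrite mem_iota.
Qed.

Definition ap_breaking (n : nat) (F : nat -> nat) : Prop :=
  forall x y z, x < y -> y < z -> z <= n -> x + z = 2 * y -> F x + F z != 2 * F y.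

Definition seq_ap_breaking (s : seq nat) : bool :=
  all_triples (size s).-1 (fun x y z =>
    (x + z == 2 * y) ==> (nth 0 s x + nth 0 s z != 2 * nth 0 s y)).

Lemma seq_ap_breaking_sound s : seq_ap_breaking s -> ap_breaking (size s).-1 (nth 0 s).
Proof. by move=> /all_triples_sound s_ok x y z xy yz z_s /eqP; apply/implyP/s_ok. Qed.

Definition base_coloring (a : nat) : seq nat :=
  match a with
  | 3 => [:: 1; 1; 0; 2; 0; 1; 1; 2; 0; 2; 0; 0; 2; 0; 2; 1; 1; 0; 2; 0; 1; 1]
  | 4 => [:: 0; 0; 1; 0; 0; 1; 1; 3; 3; 0; 0; 3; 3; 1; 1; 2; 1; 1; 3; 3; 2; 2;
             3; 0; 0; 1; 0; 0]
  | 5 => [:: 0; 0; 1; 0; 0; 1; 1; 3; 3; 0; 0; 1; 0; 0; 1; 1; 4; 3; 4; 4; 3; 1;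
             3; 4; 4; 3; 4; 0; 0; 1; 0; 0; 1; 1]
  | 6 => [:: 0; 0; 1; 0; 0; 1; 1; 3; 3; 0; 0; 1; 0; 0; 1; 1; 3; 3; 4; 3; 4; 1;
             5; 2; 4; 5; 4; 0; 3; 0; 0; 2; 0; 1; 3; 2; 3; 5; 5; 0]
  | 7 => [:: 0; 0; 1; 0; 0; 1; 1; 3; 3; 0; 0; 1; 0; 0; 1; 1; 3; 3; 4; 3; 4; 1;
             5; 2; 4; 5; 4; 0; 3; 0; 0; 2; 0; 1; 3; 2; 3; 5; 5; 0; 0; 1; 3; 3;
             1; 2]
  | 8 => [:: 0; 0; 1; 0; 0; 1; 1; 3; 3; 0; 0; 1; 0; 0; 1; 1; 3; 3; 1; 3; 3; 4;
             7; 4; 4; 7; 4; 0; 0; 1; 0; 0; 1; 1; 3; 3; 0; 0; 1; 0; 0; 1; 1; 3;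
             3; 1; 3; 3; 4; 7; 4; 4]
  | 9 => [:: 0; 0; 1; 0; 0; 1; 1; 3; 3; 0; 0; 1; 0; 0; 1; 1; 3; 3; 1; 3; 3; 4;
             4; 7; 4; 4; 8; 0; 0; 1; 0; 0; 1; 1; 3; 3; 0; 0; 1; 0; 0; 1; 1; 3;
             3; 1; 3; 3; 4; 4; 7; 4; 4; 8; 8; 3; 3; 4]
  | 10 => [:: 0; 0; 1; 0; 0; 1; 1; 3; 3; 0; 0; 1; 0; 0; 1; 1; 3; 3; 1; 3; 3; 4;
              4; 7; 4; 4; 8; 0; 0; 1; 0; 0; 1; 1; 3; 3; 0; 0; 1; 0; 0; 1; 1; 3;
              3; 1; 3; 3; 4; 4; 7; 4; 4; 8; 8; 3; 3; 4; 4; 9; 4; 4; 9; 1]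
  | _ => [::]
  end.

Lemma base_colorings_ok :
  all (fun a => [&& seq_ap_breaking (base_coloring a), all (gtn a) (base_coloring a)
                  & 6 * a + 4 <= size (base_coloring a)]) (iota 3 8).
Proof. by vm_compute. Qed.

Lemma ap_breaking_le n n' F : n' <= n -> ap_breaking n F -> ap_breaking n' F.
Proof. by move=> n'n F_ap x y z xy yz z_n'; apply: F_ap (leq_trans z_n' n'n). Qed.

Lemma base4_digit_ap rx ry rz : rx < 4 -> ry < 4 -> rz < 4 ->
  rx + rz = 2 * ry %[mod 4] -> rx != ry ->
  (1 < rx) + (1 < rz) != 2 * (1 < ry) %[mod 3].
Proof.
by case: rx => [|[|[|[|]]]] // _; case: ry => [|[|[|[|]]]] // _; case: rz => [|[|[|[|]]]].
Qed.

Definition base4_lift (F : nat -> nat) (x : nat) : nat := (1 < x %% 4) + 3 * F (x %/ 4).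

(* Equal last base-4 digits reduce to the quotients; otherwise the two sides
   already differ mod 3. *)
Lemma ap_breaking_base4 n F : ap_breaking n F -> ap_breaking (4 * n + 3) (base4_lift F).
Proof.
move=> F_ap x y z xy yz z_n xz; rewrite /base4_lift.
have [rxy|rxy] := eqVneq (x %% 4) (y %% 4).
  have ryz : z %% 4 = y %% 4 by lia.
  have := @F_ap (x %/ 4) (y %/ 4) (z %/ 4); rewrite rxy ryz.
  have q_xy : x %/ 4 < y %/ 4 by lia.
  have q_yz : y %/ 4 < z %/ 4 by lia.
  have q_z : z %/ 4 <= n by lia.
  have q_xz : x %/ 4 + z %/ 4 = 2 * (y %/ 4) by lia.
  by move=> /(_ q_xy q_yz q_z q_xz); lia.
have mod_xz : x %% 4 + z %% 4 = 2 * (y %% 4) %[mod 4] by lia.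
have := base4_digit_ap (ltn_pmod x (isT : 0 < 4)) (ltn_pmod y (isT : 0 < 4))
  (ltn_pmod z (isT : 0 < 4)) mod_xz rxy.
move=> /eqP digits_neq; apply/eqP => F_eq; apply: digits_neq; move: F_eq.
by move: (1 < x %% 4) (1 < y %% 4) (1 < z %% 4) => [] [] [] /=; lia.
Qed.

(* The fuel only ensures termination: n is divided by 4 at each step. *)
Fixpoint ap_coloring_rec (fuel n : nat) : nat -> nat :=
  if fuel is fuel'.+1 then
    if n <= 63 then nth 0 (base_coloring ((n + 2) %/ 6))
    else base4_lift (ap_coloring_rec fuel' (n %/ 4))
  else fun=> 0.

Definition ap_coloring (n : nat) : nat -> nat := ap_coloring_rec n n.

Lemma ap_coloring_rec_spec fuel n : 16 <= n <= fuel ->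
  (forall x, x <= n -> ap_coloring_rec fuel n x < (n + 2) %/ 6)
  /\ ap_breaking n (ap_coloring_rec fuel n).
Proof.
elim: fuel n => [|fuel IH] n /andP [n16 n_fuel] /=; first lia.
case: leqP => [n63|n64].
  set a := (n + 2) %/ 6; have a_range : a \in iota 3 8 by rewrite mem_iota /a; lia.
  have /and3P [s_ap /allP s_lt s_size] := allP base_colorings_ok a a_range.
  have n_size : n < size (base_coloring a) by rewrite /a in s_size *; lia.
  split=> [x x_n|]; first by apply/s_lt/mem_nth; apply: leq_ltn_trans n_size.
  apply: ap_breaking_le (seq_ap_breaking_sound s_ap).
  by rewrite -ltnS prednK // (leq_ltn_trans _ n_size).
have n4 : 16 <= n %/ 4 <= fuel by lia.
have [IH_lt IH_ap] := IH _ n4.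
split=> [x x_n|].
  by have := IH_lt _ (leq_div2r 4 x_n); rewrite /base4_lift; case: (1 < _); lia.
by apply: ap_breaking_le (ap_breaking_base4 IH_ap); lia.
Qed.

Lemma ap_coloring_spec n : 16 <= n ->
  (forall x, x <= n -> ap_coloring n x < (n + 2) %/ 6) /\ ap_breaking n (ap_coloring n).
Proof. by move=> n16; apply: ap_coloring_rec_spec; rewrite n16 leqnn. Qed.

Lemma large_td_offsets n k : 16 <= n ->
  exists c, td_offsets n k c /\ c n <= n * k + n * n.+1 %/ 2.
Proof.
move=> n16; have [F_lt F_ap] := ap_coloring_spec n16.
set a := (n + 2) %/ 6 in F_lt *; set F := ap_coloring n in F_lt F_ap *.
have a3 : 3 <= a by rewrite /a; lia.
have a6 : 6 * a <= n + 2 by rewrite /a; lia.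
exists (fun i => i * (k + 3 * a - 1) + (if i == 0 then 0 else a + F i)); split.
  apply: perturbed_td_offsets => [||i i_gt0 i_n|x y z x_gt0 xy yz z_n xz]; first by lia.
  - by [].
  - by rewrite gtn_eqF //; have := F_lt i i_n; lia.
  - have y_gt0 := ltn_trans x_gt0 xy; have z_gt0 := ltn_trans y_gt0 yz.
    rewrite (gtn_eqF x_gt0) (gtn_eqF y_gt0) (gtn_eqF z_gt0).
    by have := F_ap x y z xy yz z_n xz; lia.
have budget : n * (3 * a - 1) + (2 * a - 1) <= n * n.+1 %/ 2.
  by rewrite leq_divRL //; nia.
have := F_lt n (leqnn n); rewrite gtn_eqF; last lia.
have -> : k + 3 * a - 1 = k + (3 * a - 1) by lia.
by rewrite mulnDr; lia.
Qed.

(* The least k with D <= e.+1 * k is ceil (D / e.+1), and e * k grows with k. *)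
Definition no_window_above (D e : nat) : bool := D <= e * ((D + e) %/ e.+1).

Lemma no_window_above_sound D e k :
  no_window_above D e -> 0 < k -> ~~ (e * k < D <= e * k + k).
Proof.
move=> noD k_gt0; apply/negP => /andP [lt_D le_D].
have le_k : (D + e) %/ e.+1 <= k by rewrite -ltnS ltn_divLR // mulnC; lia.
by have := leq_mul (leqnn e) le_k; move: noD; rewrite /no_window_above; lia.
Qed.

(* The least k with D < g.+1 * k is D %/ g.+1 + 1. *)
Definition no_window_below (D g : nat) : bool := D < g * (D %/ g.+1).+1.

Lemma no_window_below_sound D g k : no_window_below D g -> ~~ (g * k <= D < g * k + k).
Proof.
move=> noD; apply/negP => /andP [le_D lt_D].
have lt_k : D %/ g.+1 < k by rewrite ltn_divLR // mulnC mulSn; lia.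
by have := leq_mul (leqnn g) lt_k; move: noD; rewrite /no_window_below; lia.
Qed.

Definition no_positive_multiple (A B e : nat) : bool := (B < A + e) || ~~ (e %| B - A).

Lemma no_positive_multiple_sound A B e k :
  no_positive_multiple A B e -> 0 < k -> e * k + A != B.
Proof.
case/orP=> [lt_B|ndvd] k_gt0; first by apply/eqP; nia.
by apply: contra ndvd => /eqP <-; rewrite addnK dvdn_mulr.
Qed.

Definition offsets_table_ok (n : nat) (s : seq nat) : bool :=
  let t := nth 0 s in
  [&& t 0 == 0,
      all_pairs n (fun i j => (t i <= t j) &&
        if j <= 2 * i then no_window_above (t j - 2 * t i) (2 * i - j)
        else (2 * t i < t j) || no_window_below (2 * t i - t j) (j - 2 * i).-1) &
      all_triples n (fun x y z =>
        if x + z == 2 * y then t x + t z != 2 * t y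
        else if 2 * y < x + z then
          no_positive_multiple (t x + t z) (2 * t y) (x + z - 2 * y)
        else no_positive_multiple (2 * t y) (t x + t z) (2 * y - (x + z)))].

Definition small_offsets_table (n : nat) : seq nat :=
  if n <= 2 then [:: 0; 1; 1]
  else if n <= 6 then [:: 0; 2; 3; 5; 5; 7; 8]
  else if n <= 8 then [:: 0; 3; 5; 8; 9; 12; 14; 17; 17]
  else if n <= 14 then [:: 0; 4; 6; 9; 10; 13; 15; 19; 19; 23; 25; 28; 29; 32; 34]
  else [:: 0; 5; 8; 12; 14; 18; 21; 25; 27; 33; 35; 40; 41; 46; 48; 53].

Lemma small_offsets_tables_ok :
  all (fun n => offsets_table_ok n (small_offsets_table n)
                && (nth 0 (small_offsets_table n) n <= n * n.+1 %/ 2)) (iota 0 16).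
Proof. by []. Qed.

Lemma offsets_table_sound n s k :
  offsets_table_ok n s -> 0 < k -> td_offsets n k (fun i => i * k + nth 0 s i).
Proof.
rewrite /offsets_table_ok /=; set t := nth 0 s.
case/and3P=> /eqP t0 /all_pairs_sound pairs_ok /all_triples_sound triples_ok k_gt0.
split=> [|i j ij j_n|i j ij j_n|x y z xy yz z_n]; first by rewrite t0.
- have /andP [t_ij _] := pairs_ok i j ij j_n.
  by have := leq_mul_step k ij; lia.
- have /andP [_] := pairs_ok i j ij j_n; rewrite mulnDr mulnA.
  case: (leqP j (2 * i)) => [le_j /no_window_above_sound/(_ k_gt0)|lt_j].
  + have -> : 2 * i * k = j * k + (2 * i - j) * k by rewrite -mulnDl subnKC.
    lia.
  case/orP=> [lt_t|/(@no_window_below_sound _ _ k)].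
  + by have := leq_mul_step k lt_j; lia.
  + have -> : j * k = 2 * i * k + (j - 2 * i).-1 * k + k.
      by rewrite -addnA -mulSnr prednK ?subn_gt0 // -mulnDl subnKC // ltnW.
    lia.
- have := triples_ok x y z xy yz z_n; rewrite mulnDr mulnA.
  have -> : x * k + t x + (z * k + t z) = (x + z) * k + (t x + t z) by rewrite mulnDl; lia.
  case: (ltngtP (x + z) (2 * y)) => [lt_xz|lt_y|->]; rewrite ?eqn_add2l //.
  + move=> /no_positive_multiple_sound/(_ k_gt0).
    have -> : 2 * y * k = (x + z) * k + (2 * y - (x + z)) * k.
      by rewrite -mulnDl subnKC // ltnW.
    lia.
  + move=> /no_positive_multiple_sound/(_ k_gt0).
    have -> : (x + z) * k = 2 * y * k + (x + z - 2 * y) * k.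
      by rewrite -mulnDl subnKC // ltnW.
    lia.
Qed.

Lemma small_td_offsets n k : n <= 15 -> 0 < k ->
  exists c, td_offsets n k c /\ c n <= n * k + n * n.+1 %/ 2.
Proof.
move=> n15 k_gt0; have n_range : n \in iota 0 16 by rewrite mem_iota.
have /andP [s_ok s_n] := allP small_offsets_tables_ok n n_range.
exists (fun i => i * k + nth 0 (small_offsets_table n) i).
by split; [exact: offsets_table_sound | lia].
Qed.

Lemma td_offsets_exist n k : 0 < k ->
  exists c, td_offsets n k c /\ c n <= n * k + n * n.+1 %/ 2.
Proof.
move=> k_gt0; case: (leqP n 15) => [n15|n16]; first exact: small_td_offsets.
exact: large_td_offsets.
Qed.

Theorem mainTheorem11 (m : nat) (T : finType) (e : rel T) (kG kH : nat) :
  0 < m -> simple_graph e ->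
  is_chi_td e kG ->
  is_chi_td (cart_prod (@complete_rel m) e) kH ->
  kH <= m * kG + (m * (m - 1)) %/ 2.
Proof.
(* The construction works for any relation. *)
case: m => // n _ _ [kG_gt0 [[g g_td] _]] [_ [_ kH_min]].
have [c [c_offsets c_n]] := td_offsets_exist n kG_gt0.
have := kH_min _ _ (ex_intro _ _ (cart_prod_td_labeling kG_gt0 g_td c_offsets)).
by rewrite subn1 /= [n.+1 * n]mulnC; lia.
Qed.
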